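(* Let $I\subset\mathbb{R}$ be an uncountable set. Then the set $\mathrm{NBF}(I)$ of unbounded real-valued functions on $I$ is $2^{\mathrm{card}(I)}$-lineable; that is, there is a vector subspace $V$ of $\mathbb{R}^I$ of dimension $2^{\mathrm{card}(I)}$ such that every nonzero $f\in V$ is unbounded on $I$.
   Context: For a cardinal $\mu$, a set $M$ of functions is called $\mu$-lineable if $M\cup\{0\}$ contains a vector space of dimension $\mu$. *)

From mathcomp Require Import all_boot all_order all_algebra.
From mathcomp Require Import all_classical all_reals.
Set Implicit Arguments. Unset Strict Implicit. Unset Printing Implicit Defensive.
Import Order.TTheory GRing.Theory Num.Theory.
Local Open Scope ring_scope.
Local Open Scope classical_set_scope.

Definition elt_of (R : realType) (I : set R) : Type := {x : R | I x}.

Definition NBF (R : realType) (I : set R) : set (elt_of I -> R) :=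
  [set f | forall M : R, exists x : elt_of I, M < `|f x|].

Definition lin_comb (R : realType) (T : Type) (J : eqType)
  (b : J -> T -> R) (s : seq J) (c : J -> R) : T -> R :=
  fun x => \sum_(j <- s) c j * b j x.

Definition lin_indep (R : realType) (T : Type) (J : eqType) (b : J -> T -> R) :=
  forall (s : seq J) (c : J -> R), uniq s ->
    lin_comb b s c = (fun _ => 0) -> forall j, j \in s -> c j = 0.

(* M is mu-lineable, with mu = card J: M u {0} contains a vector space of
   dimension card J, namely the linear span of a linearly independent family
   indexed by J (which is then a basis of that space). *)
Definition lineable (R : realType) (T : Type) (M : set (T -> R)) (J : eqType) :=
  exists b : J -> T -> R, lin_indep b /\
    forall (s : seq J) (c : J -> R),
      lin_comb b s c = (fun _ => 0) \/ M (lin_comb b s c).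

From mathcomp Require Import all_boot all_order all_algebra.
From mathcomp Require Import all_classical all_reals.
Set Implicit Arguments. Unset Strict Implicit. Unset Printing Implicit Defensive.
Import Order.TTheory GRing.Theory Num.Theory.
Local Open Scope classical_set_scope.

(* An infinite type T admits an injection T * T -> T, hence one from
   seq T * nat into T, so that every point x of T decodes to a finite list L_x
   and a natural number n_x.  For A : set T let b_A x := n_x [L_x <= A].
   At x, a combination sum_A c_A b_A takes the value n_x * Phi L_x, where
   Phi L := sum_A c_A [L <= A]; as n_x is arbitrary, it is either zero or
   unbounded, and Phi = 0 forces every c_A = 0 (evaluate Phi at a list inside
   an inclusion-maximal A with c_A <> 0 escaping the other sets).
   The injection T * T -> T comes from Zorn's lemma applied to graphs of
   injections D * D -> D with D a subset of T: a maximal graph whose domain D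
   injects into the complement of D could be extended by a copy of D. *)

Lemma Zorn_bigcup_from (T : Type) (P : set (set T)) (X0 : set T) :
  P X0 ->
  (forall F : set (set T), F `<=` P -> total_on F subset ->
    P (\bigcup_(X in F) X)) ->
  exists A, [/\ X0 `<=` A, P A & forall B, A `<` B -> ~ P B].
Proof.
move=> PX0 Pchain.
(* [Zorn_bigcup] also requires the union of the empty chain, [set0], in [Q]. *)
pose Q X := P X /\ (X = set0 \/ X0 `<=` X).
have Qchain F : F `<=` Q -> total_on F subset -> Q (\bigcup_(X in F) X).
  move=> FQ Ftot; split; first by apply: Pchain => // X /FQ[].
  have [[X FX [x Xx]]|F0] := pselect (exists2 X, F X & X !=set0).
    have [_ [X0_|X0X]] := FQ _ FX; first by rewrite X0_ in Xx.
    by right; apply: subset_trans X0X _; exact: bigcup_sup.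
  left; apply/seteqP; split=> // x [X FX Xx].
  by apply: F0; exists X => //; exists x.
have [A [[PA A0X0] Amax]] := Zorn_bigcup Qchain.
have X0A : X0 `<=` A.
  case: A0X0 => // A0; subst A; apply: contrapT => nX0.
  by apply: (Amax X0); split=> //; right.
exists A; split=> // B AB PB; apply: (Amax B AB); split=> //; right.
exact: subset_trans X0A (properW AB).
Qed.

Lemma total_on_subset_ub (T : Type) (F : set (set T)) (X Y : set T) :
  total_on F subset -> F X -> F Y -> exists2 Z, F Z & X `|` Y `<=` Z.
Proof.
move=> Ftot FX FY; have [XY|YX] := Ftot _ _ FX FY.
  by exists Y => // t [/XY|].
by exists X => // t [|/YX].
Qed.

Section PartialInjection.
Variables U V : Type.

Definition pinj_graph (G : set (U * V)) :=
  (forall x y y', G (x, y) -> G (x, y') -> y = y') /\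
  (forall x x' y, G (x, y) -> G (x', y) -> x = x').

Lemma pinj_graph_bigcup (F : set (set (U * V))) :
  F `<=` pinj_graph -> total_on F subset -> pinj_graph (\bigcup_(G in F) G).
Proof.
move=> Fpinj Ftot; split.
- move=> x y y' [G FG Gxy] [G' FG' Gxy'].
  have [H FH GH] := total_on_subset_ub Ftot FG FG'.
  by apply: (Fpinj _ FH).1 (GH _ (or_introl Gxy)) (GH _ (or_intror Gxy')).
- move=> x x' y [G FG Gxy] [G' FG' Gxy'].
  have [H FH GH] := total_on_subset_ub Ftot FG FG'.
  by apply: (Fpinj _ FH).2 (GH _ (or_introl Gxy)) (GH _ (or_intror Gxy')).
Qed.

Lemma pinj_graph_fun (X : set U) (Y : set V) (G : set (U * V)) (v0 : V) :
  pinj_graph G -> G `<=` X `*` Y -> (forall x, X x -> exists y, G (x, y)) ->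
  exists2 f : U -> V, set_fun X Y f & set_inj X f.
Proof.
move=> [Gfun Ginj] GXY Gtot.
have /choice[f fG] : forall x, exists y, X x -> G (x, y).
  by move=> x; have [/Gtot[y]|] := pselect (X x); [exists y | exists v0].
exists f; first by move=> x Xx; have [] := GXY _ (fG x Xx).
move=> x x' /set_mem Xx /set_mem Xx' fxx'.
by apply: Ginj (fG _ Xx) _; rewrite fxx'; exact: fG.
Qed.

Lemma pinj_graphU (G H : set (U * V)) : pinj_graph G -> pinj_graph H ->
  (forall x y y', G (x, y) -> ~ H (x, y')) ->
  (forall x x' y, G (x, y) -> ~ H (x', y)) -> pinj_graph (G `|` H).
Proof.
move=> [Gfun Ginj] [Hfun Hinj] GH1 GH2; split.
- move=> x y y' [Gxy|Hxy] [Gxy'|Hxy'].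
  + exact: Gfun Gxy Gxy'.
  + by case: (GH1 _ _ _ Gxy Hxy').
  + by case: (GH1 _ _ _ Gxy' Hxy).
  + exact: Hfun Hxy Hxy'.
- move=> x x' y [Gxy|Hxy] [Gxy'|Hxy'].
  + exact: Ginj Gxy Gxy'.
  + by case: (GH2 _ _ _ Gxy Hxy').
  + by case: (GH2 _ _ _ Gxy' Hxy).
  + exact: Hinj Hxy Hxy'.
Qed.

Lemma pinj_graph_set1 (p : U * V) : pinj_graph [set p].
Proof. by split=> [x y y' <- []|x x' y <- []]. Qed.

End PartialInjection.

Lemma pinj_graph_swap (U V : Type) (G : set (U * V)) :
  pinj_graph G -> pinj_graph [set p : V * U | G (p.2, p.1)].
Proof.
move=> [Gfun Ginj]; split=> [x y y' /= Gyx Gy'x|x x' y /= Gyx Gyx'].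
  exact: Ginj Gyx Gy'x.
exact: Gfun Gyx Gyx'.
Qed.

Lemma set_inj_pair (T U : Type) (B : set T) (f : T * T -> U) a b a' b' :
  set_inj (B `*` B) f -> B a -> B b -> B a' -> B b' ->
  f (a, b) = f (a', b') -> a = a' /\ b = b'.
Proof.
move=> finj Ba Bb Ba' Bb' /finj; rewrite !inE.
by move=> /(_ (conj Ba Bb) (conj Ba' Bb')) [-> ->].
Qed.

Lemma set_inj_comparable (U V : Type) (u0 : U) (v0 : V)
    (X : set U) (Y : set V) :
  (exists2 f : U -> V, set_fun X Y f & set_inj X f) \/
  (exists2 g : V -> U, set_fun Y X g & set_inj Y g).
Proof.
pose P G := G `<=` X `*` Y /\ pinj_graph G.
have Pchain F : F `<=` P -> total_on F subset -> P (\bigcup_(G in F) G).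
  move=> FP Ftot; split; first by move=> p [G /FP[GXY _] /GXY].
  by apply: pinj_graph_bigcup Ftot => G /FP[].
have [G [[GXY Gpinj] Gmax]] := Zorn_bigcup Pchain.
have [Xtot|/existsNP[x0 /not_implyP[Xx0 nx0]]] :=
  pselect (forall x, X x -> exists y, G (x, y)).
  by left; exact: pinj_graph_fun v0 Gpinj GXY Xtot.
have [Ytot|/existsNP[y0 /not_implyP[Yy0 ny0]]] :=
  pselect (forall y, Y y -> exists x, G (x, y)).
  right; apply: pinj_graph_fun u0 (pinj_graph_swap Gpinj) _ _.
    by move=> [y x] /GXY[].
  by move=> y /Ytot[x Gxy]; exists x.
exfalso; apply: (Gmax (G `|` [set (x0, y0)])).
  split; first by move=> p Gp; left.
  by move=> /(_ (x0, y0)) G0; apply: nx0; exists y0; apply: G0; right.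
split; first by move=> p [/GXY|->].
apply: pinj_graphU (pinj_graph_set1 _) _ _ => //.
  by move=> x y y' Gxy [ex _]; apply: nx0; exists y; rewrite -ex.
by move=> x x' y Gxy [_ ey]; apply: ny0; exists x; rewrite -ey.
Qed.

Section SquareGraph.
Variable T : Type.
Implicit Types (G H : set (T * T * T)) (a b c : T).

Definition sqdom G : set T :=
  [set a | exists b c, G ((a, b), c) \/ G ((b, a), c)].

(* [G] is the graph of an injection [D * D -> D], where [D = sqdom G]. *)
Definition sqinj_graph G := [/\ pinj_graph G,
  forall p c, G (p, c) -> sqdom G c &
  forall a b, sqdom G a -> sqdom G b -> exists c, G ((a, b), c)].

Lemma sqdom_sub G H : G `<=` H -> sqdom G `<=` sqdom H.
Proof. by move=> GH a [b [c [Gabc|Gbac]]]; exists b, c; [left|right]; apply: GH. Qed.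

Lemma sqinj_graph_bigcup (F : set (set (T * T * T))) :
  F `<=` sqinj_graph -> total_on F subset -> sqinj_graph (\bigcup_(G in F) G).
Proof.
move=> Fsq Ftot.
have FU G : F G -> sqdom G `<=` sqdom (\bigcup_(G in F) G).
  by move=> FG; apply: sqdom_sub; exact: bigcup_sup.
have domU a : sqdom (\bigcup_(G in F) G) a -> exists2 G, F G & sqdom G a.
  move=> [b [c [[G FG Gabc]|[G FG Gbac]]]]; exists G => //.
    by exists b, c; left.
  by exists b, c; right.
split.
- by apply: pinj_graph_bigcup Ftot => G /Fsq[].
- move=> p c [G FG Gpc]; have [_ Gval _] := Fsq _ FG.
  exact: FU _ FG _ (Gval _ _ Gpc).
- move=> a b /domU[G FG Ga] /domU[G' FG' G'b].
  have [H FH GH] := total_on_subset_ub Ftot FG FG'.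
  have [_ _ Htot] := Fsq _ FH.
  have [c Habc] := Htot a b (sqdom_sub (fun t Gt => GH t (or_introl Gt)) Ga)
    (sqdom_sub (fun t Gt => GH t (or_intror Gt)) G'b).
  by exists c, H.
Qed.

Lemma sqinj_graph_fun G (t0 : T) : sqinj_graph G ->
  exists2 f : T * T -> T, set_fun (sqdom G `*` sqdom G) (sqdom G) f &
    set_inj (sqdom G `*` sqdom G) f.
Proof.
move=> [Gpinj Gval Gtot]; apply: pinj_graph_fun t0 Gpinj _ _.
  move=> [[a b] c] /= Gabc; split; last exact: Gval Gabc.
  by split; [exists b, c; left | exists a, c; right].
by move=> [a b] [/= Ga Gb]; exact: Gtot.
Qed.

End SquareGraph.

Section SquareGraphExtension.
Variables (T : Type) (A : set (T * T * T)) (e : nat -> T).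
Variables (f : T * T -> T) (h : T -> T).
Let B := sqdom A.
Hypotheses (Asq : sqinj_graph A) (einj : injective e) (eB : forall n, B (e n)).
Hypotheses (fB : set_fun (B `*` B) B f) (finj : set_inj (B `*` B) f).
Hypotheses (hB : set_fun B (~` B) h) (hinj : set_inj B h).

(* The new pairs (lift u a, lift v b), with u || v, are those of
   (B `|` h @` B)^2 outside B^2; [code] sends them injectively into B, so
   [h \o code] sends them injectively into the fresh points h @` B. *)
Let lift (u : bool) (a : T) := if u then h a else a.

Let code (u v : bool) (a b : T) := f (f (a, b), e (u + 2 * v)).

Let sqnew := [set t | exists a b (u v : bool),
  [/\ B a, B b, u || v & t = ((lift u a, lift v b), h (code u v a b))]].

Definition sqext := A `|` sqnew.

Let liftB u a : B a -> B (lift u a) -> u = false.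
Proof. by case: u => // Ba /(hB Ba). Qed.

Let lift_inj u u' a a' : B a -> B a' -> lift u a = lift u' a' -> u = u' /\ a = a'.
Proof.
move=> Ba Ba'; case: u; case: u' => //= E.
- by split=> //; apply: hinj E; exact: mem_set.
- by move: (hB Ba); rewrite E.
- by move: (hB Ba'); rewrite -E.
Qed.

Let fB2 a b : B a -> B b -> B (f (a, b)).
Proof. by move=> Ba Bb; apply: fB. Qed.

Let codeB u v a b : B a -> B b -> B (code u v a b).
Proof. by move=> Ba Bb; apply: fB2 => //; exact: fB2. Qed.

Let code_inj u v u' v' a b a' b' : B a -> B b -> B a' -> B b' ->
  code u v a b = code u' v' a' b' -> [/\ u = u', v = v', a = a' & b = b'].
Proof.
move=> Ba Bb Ba' Bb'.
move=> /(set_inj_pair finj (fB2 Ba Bb) (eB _) (fB2 Ba' Bb') (eB _))[].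
move=> /(set_inj_pair finj Ba Bb Ba' Bb')[-> ->] /einj.
by case: u; case: v; case: u'; case: v'.
Qed.

Let A_B a b c : A ((a, b), c) -> [/\ B a, B b & B c].
Proof.
have [_ Aval _] := Asq.
move=> Aabc; split; last exact: Aval Aabc.
  by exists b, c; left.
by exists a, c; right.
Qed.

Let sqnew_pinj : pinj_graph sqnew.
Proof.
split.
- move=> [x y] c c' [a [b [u [v [Ba Bb _ [-> -> ->]]]]]].
  move=> [a' [b' [u' [v' [Ba' Bb' _ [ex ey ->]]]]]].
  by have [-> ->] := lift_inj Ba Ba' ex; have [-> ->] := lift_inj Bb Bb' ey.
- move=> [x y] [x' y'] c [a [b [u [v [Ba Bb _ [-> -> ->]]]]]].
  move=> [a' [b' [u' [v' [Ba' Bb' _ [-> -> /hinj]]]]]].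
  rewrite !inE => /(_ (codeB _ _ Ba Bb)) /(_ (codeB _ _ Ba' Bb')).
  by move=> /code_inj[] // -> -> -> ->.
Qed.

Lemma sqext_proper : A `<` sqext.
Proof.
split=> [t|/(_ ((h (e 0), e 0), h (code true false (e 0) (e 0))))]; first by left.
have new0 : sqnew ((h (e 0), e 0), h (code true false (e 0) (e 0))).
  by exists (e 0), (e 0), true, false.
by move=> /(_ (or_intror new0)) /A_B[Bhe _ _]; exact: hB (eB 0) Bhe.
Qed.

Let sqdom_sqext a : sqdom sqext a -> exists u a', B a' /\ a = lift u a'.
Proof.
move=> [b [c [[/A_B[Ba _ _]|[a' [b' [u [v [Ba' Bb' _ [-> _ _]]]]]]]|
              [/A_B[_ Ba _]|[a' [b' [u [v [Ba' Bb' _ [_ -> _]]]]]]]]]].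
- by exists false, a.
- by exists u, a'.
- by exists false, a.
- by exists v, b'.
Qed.

Let lift_sqdom u a : B a -> sqdom sqext (lift u a).
Proof.
case: u => /= Ba; last by apply: sqdom_sub Ba => t At; left.
by exists a, (h (code true false a a)); left; right; exists a, a, true, false.
Qed.

Lemma sqext_sqinj : sqinj_graph sqext.
Proof.
have [Apinj _ Atot] := Asq.
split.
- apply: pinj_graphU => //.
    move=> [x y] c c' /A_B[Bx By _] [a [b [u [v [Ba Bb uv [ex ey _]]]]]].
    by move: Bx By uv; rewrite ex ey => /(liftB Ba) -> /(liftB Bb) ->.
  move=> [x y] [x' y'] c /A_B[_ _ Bc] [a [b [u [v [Ba Bb _ [_ _ ec]]]]]].
  by move: Bc; rewrite ec; apply: hB; exact: codeB.
- move=> [x y] c [/A_B[_ _ Bc]|[a [b [u [v [Ba Bb _ [_ _ ->]]]]]]].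
    exact: (lift_sqdom false Bc).
  exact: (lift_sqdom true (codeB u v Ba Bb)).
- move=> x y /sqdom_sqext[u [a [Ba ->]]] /sqdom_sqext[v [b [Bb ->]]].
  have [uv|] := boolP (u || v).
    by exists (h (code u v a b)); right; exists a, b, u, v.
  rewrite negb_or => /andP[/negbTE -> /negbTE ->] /=.
  by have [c Aabc] := Atot a b Ba Bb; exists c; left.
Qed.

End SquareGraphExtension.

Lemma inj_square_of_compl_inj (T : Type) (B : set T) (f : T * T -> T)
    (h : T -> T) (t0 t1 : T) : B t0 -> B t1 -> t0 <> t1 ->
  set_fun (B `*` B) B f -> set_inj (B `*` B) f ->
  set_fun (~` B) B h -> set_inj (~` B) h ->
  exists pi : T * T -> T, injective pi.
Proof.
move=> Bt0 Bt1 t01 fB finj hB hinj.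
pose j x := if `[< B x >] then f (x, t0) else f (h x, t1).
have jB x : B (j x).
  by rewrite /j; case: asboolP => Bx; apply: fB; split=> //; exact: hB.
have j_inj : injective j.
  move=> x y; rewrite /j; case: asboolP => Bx; case: asboolP => By.
  - by move=> /(set_inj_pair finj Bx Bt0 By Bt0)[].
  - by move=> /(set_inj_pair finj Bx Bt0 (hB _ By) Bt1)[_ /t01].
  - by move=> /(set_inj_pair finj (hB _ Bx) Bt1 By Bt0)[_ /esym/t01].
  move=> /(set_inj_pair finj (hB _ Bx) Bt1 (hB _ By) Bt1)[hxy _].
  by apply: hinj hxy; exact: mem_set.
exists (fun p => f (j p.1, j p.2)) => -[x y] [x' y'] /=.
by move=> /(set_inj_pair finj (jB x) (jB y) (jB x') (jB y'))[/j_inj -> /j_inj ->].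
Qed.

Definition nat_sqgraph (T : Type) (e : nat -> T) : set (T * T * T) :=
  [set t | exists i j, t = ((e i, e j), e (pickle (i, j)))].

Lemma nat_sqgraphP (T : Type) (e : nat -> T) : injective e ->
  sqinj_graph (nat_sqgraph e) /\ forall n, sqdom (nat_sqgraph e) (e n).
Proof.
move=> einj; set G := nat_sqgraph e.
have Ge n : sqdom G (e n) by exists (e 0), (e (pickle (n, 0))); left; exists n, 0.
have Gdom a : sqdom G a -> exists n, a = e n.
  by move=> [b [c [[i [j [-> _ _]]]|[i [j [_ -> _]]]]]]; eexists.
split=> //; split.
- split.
  + by move=> [x y] c c' [i [j [-> -> ->]]] [i' [j' [/einj-> /einj-> ->]]].
  + move=> [x y] [x' y'] c [i [j [-> -> ->]]] [i' [j' [-> -> /einj]]].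
    by move=> /(pcan_inj pickleK) [-> ->].
- by move=> p c [i [j [_ ->]]].
- move=> a b /Gdom[i ->] /Gdom[j ->].
  by exists (e (pickle (i, j))), i, j.
Qed.

Theorem inj_square_of_inj_nat (T : Type) (e : nat -> T) : injective e ->
  exists pi : T * T -> T, injective pi.
Proof.
move=> einj; have [G0sq G0e] := nat_sqgraphP einj.
have [A [G0A Asq Amax]] := Zorn_bigcup_from G0sq (@sqinj_graph_bigcup T).
have eB n : sqdom A (e n) by exact: (sqdom_sub G0A) _ (G0e n).
have [f fB finj] := sqinj_graph_fun (e 0) Asq.
(* Either [sqdom A] injects into its complement, and then [A] is not maximal,
   or the complement injects into [sqdom A]. *)
have [[h hB hinj]|[h hB hinj]] :=
  set_inj_comparable (e 0) (e 0) (sqdom A) (~` sqdom A).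
  by case: (Amax _ (sqext_proper f Asq eB hB)); exact: sqext_sqinj.
by apply: inj_square_of_compl_inj (eB 0) (eB 1) _ fB finj hB hinj => /einj.
Qed.

Lemma inj_seq_nat_of_inj_nat (T : Type) (e : nat -> T) : injective e ->
  exists enc : seq T * nat -> T, injective enc.
Proof.
move=> einj; have [pi pi_inj] := inj_square_of_inj_nat einj.
(* The tag [e 1] keeps nonempty lists away from the code of [::]. *)
pose fix encs L :=
  if L is x :: L' then pi (pi (x, encs L'), e 1) else pi (e 0, e 0).
have encs_inj : injective encs.
  elim=> [|x L IH] [|y L'] //= /pi_inj[].
  - by move=> _ /einj.
  - by move=> _ /einj.
  - by move=> /pi_inj[-> /IH ->].
exists (fun p => pi (encs p.1, e p.2)) => -[L n] [L' n'] /= /pi_inj[].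
by move=> /encs_inj -> /einj ->.
Qed.

Lemma inj_nat_elt_of (R : realType) (I : set R) : infinite_set I ->
  exists e : nat -> elt_of I, injective e.
Proof.
move=> /infiniteP/card_leP/injfunPex[g _ ginj].
pose n' (n : nat) : [set: nat] := SigSub (in_setT n).
exists (fun n => exist _ (val (g (n' n))) (set_mem (valP (g (n' n))))).
move=> m n /(congr1 (@proj1_sig _ _))/val_inj/ginj gmn.
by have /(congr1 val) := gmn (in_setT _) (in_setT _).
Qed.

Lemma seq_subset_maximal (T : Type) (S : seq (set T)) : S != [::] ->
  exists2 m, m \in S & forall A, A \in S -> m `<=` A -> A = m.
Proof.
elim: S => [//|X S IH] _.
have [->|/IH[m mS mmax]] := eqVneq S [::].
  by exists X; [rewrite mem_head | move=> A; rewrite inE => /eqP].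
have [mX|nmX] := pselect (m `<=` X).
  exists X; first exact: mem_head.
  move=> A; rewrite inE => /predU1P[//|AS XA].
  have Am := mmax A AS (subset_trans mX XA).
  by apply/seteqP; split=> //; rewrite Am.
exists m; first by rewrite inE mS orbT.
by move=> A; rewrite inE => /predU1P[->|]; [|exact: mmax].
Qed.

Lemma all_flatten (T : Type) (a : pred T) (ss : seq (seq T)) :
  all a (flatten ss) = all (all a) ss.
Proof. by elim: ss => //= s ss IH; rewrite all_cat IH. Qed.

Local Open Scope ring_scope.

Definition seq_ind (R : realType) (T : Type) (A : set T) (L : seq T) : R :=
  (all (fun x => `[< A x >]) L)%:R.

Lemma seq_ind_lin_indep (R : realType) (T : Type) : lin_indep (@seq_ind R T).
Proof.
move=> s c s_uniq comb0 j js; apply: contrapT => /eqP cj.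
pose S := [seq A <- s | c A != 0].
have [m mS mmax] : exists2 m, m \in S & forall A, A \in S -> m `<=` A -> A = m.
  by apply: seq_subset_maximal; apply: contraTneq (_ : j \in S) => [->|] //;
    rewrite mem_filter js andbT.
have /andP[cm ms] : (c m != 0) && (m \in s) by move: mS; rewrite mem_filter.
have /choice[w wP] : forall A : set T, exists L : seq T,
    all (fun x => `[< m x >]) L /\
    (A \in S -> A != m -> ~~ all (fun x => `[< A x >]) L).
  move=> A; have [[x [mx nAx]]|mA] := pselect (exists x, m x /\ ~ A x).
    by exists [:: x]; rewrite /= !andbT; split=> [|_ _]; exact/asboolP.
  exists [::]; split=> // AS Am; case/negP: Am; apply/eqP/mmax => // x mx.
  by apply: contrapT => nAx; apply: mA; exists x.
pose L := flatten [seq w A | A <- S].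
have ind_m : seq_ind R m L = 1.
  rewrite /seq_ind all_flatten all_map (_ : all _ _ = true) //.
  by apply/allP => A _ /=; have [] := wP A.
have ind_other A : A \in S -> A != m -> seq_ind R A L = 0.
  move=> AS Am; rewrite /seq_ind all_flatten; apply/eqP; rewrite pnatr_eq0 eqb0.
  by rewrite all_map; apply/allPn; exists A => //=; have [_] := wP A; exact.
move: (congr1 (fun g => g L) comb0); rewrite /lin_comb /= (bigD1_seq m) //=.
rewrite ind_m mulr1 big_seq_cond big1 ?addr0 => [/eqP|A /andP[As Am]].
  by rewrite (negbTE cm).
have [->|cA] := eqVneq (c A) 0; first by rewrite mul0r.
by rewrite ind_other ?mulr0 // mem_filter cA.
Qed.

Section CodedFamily.
Variables (R : realType) (T : Type) (dec : T -> seq T * nat).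
Hypothesis dec_surj : forall p, exists x, dec x = p.

Definition coded_family (A : set T) (x : T) : R :=
  (dec x).2%:R * seq_ind R A (dec x).1.

Lemma lin_comb_coded_family s c x : lin_comb coded_family s c x =
  (dec x).2%:R * lin_comb (@seq_ind R T) s c (dec x).1.
Proof. by rewrite /lin_comb big_distrr; apply: eq_bigr => A _; rewrite mulrCA. Qed.

Lemma coded_family_lin_indep : lin_indep coded_family.
Proof.
move=> s c s_uniq comb0; apply: seq_ind_lin_indep s_uniq _; apply: funext => L.
have [x dx] := dec_surj (L, 1%N).
by have := congr1 (fun g => g x) comb0; rewrite /= lin_comb_coded_family dx mul1r.
Qed.

Lemma coded_family_unbounded s c : lin_comb coded_family s c = (fun=> 0) \/
  forall M : R, exists x, M < `|lin_comb coded_family s c x|.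
Proof.
pose Phi := lin_comb (@seq_ind R T) s c.
have [Phi0|/existsNP[L /eqP PhiL]] := pselect (forall L, Phi L = 0).
  by left; apply: funext => x; rewrite lin_comb_coded_family -/Phi Phi0 mulr0.
right => M; have [x dx] := dec_surj (L, Num.bound (`|M| / `|Phi L|)).
rewrite -normr_gt0 in PhiL.
exists x; rewrite lin_comb_coded_family -/Phi dx normrM normr_nat.
rewrite (le_lt_trans (ler_norm M)) // -ltr_pdivrMr //.
by apply: archi_boundP; apply: divr_ge0.
Qed.

End CodedFamily.

Lemma unbounded_lineable (R : realType) (T : Type) (e : nat -> T) :
  injective e ->
  lineable [set f : T -> R | forall M : R, exists x, M < `|f x|] (set T).
Proof.
move=> einj; have [enc enc_inj] := inj_seq_nat_of_inj_nat einj.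
pose dec := 'pinv_(fun=> ([::], 0%N)) [set: seq T * nat] enc.
have dec_surj p : exists x, dec x = p.
  by exists (enc p); apply: pinvKV; [exact: in2W | exact: in_setT].
exists (coded_family R dec); split; first exact: coded_family_lin_indep.
exact: coded_family_unbounded.
Qed.

Theorem lemma3p2 (R : realType) (I : set R) (hI : ~ countable I) :
  @lineable R (@elt_of R I) (@NBF R I) (set (@elt_of R I)).
Proof.
have [e einj] := inj_nat_elt_of (fun Ifin => hI (finite_set_countable Ifin)).
exact: unbounded_lineable einj.
Qed.
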